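(* For every finite simple graph $G$, $\gamma_{sR}(G\vee K_1)\geq 1$. Moreover, if $\gamma_{sR}(G)=0$, then $\gamma_{sR}(G\vee K_1)=1$.
   Context: For a graph $G=(V,E)$ and $x\in V$, $N_G[x]=\{x\}\cup\{y: xy\in E\}$. A signed Roman dominating function (SRDF) on $G$ is a function $f:V\to\{-1,1,2\}$ such that (a) $\sum_{y\in N_G[x]}f(y)\geq 1$ for every $x\in V$, and (b) every vertex $x$ with $f(x)=-1$ is adjacent to at least one vertex $y$ with $f(y)=2$. The weight of $f$ is $\sum_{x\in V}f(x)$, and $\gamma_{sR}(G)$ is the minimum weight of an SRDF on $G$. The join $G_1\vee G_2$ of two graphs has vertex set $V(G_1)\cup V(G_2)$ (disjoint union) and edge set $E(G_1)\cup E(G_2)\cup\{uv: u\in V(G_1), v\in V(G_2)\}$. $K_1$ is the graph with a single vertex. *)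

From mathcomp Require Import all_boot all_order all_algebra.
Set Implicit Arguments. Unset Strict Implicit. Unset Printing Implicit Defensive.
Import Order.TTheory GRing.Theory Num.Theory.
Local Open Scope ring_scope.

(* A finite simple graph is a vertex type T : finType with a symmetric,
   irreflexive adjacency relation e : rel T. *)

Definition closed_nbhd (T : finType) (e : rel T) (x y : T) : bool :=
  (y == x) || e x y.

Definition weight (T : finType) (f : T -> int) : int := \sum_(x : T) f x.

Definition dec3 (i : 'I_3) : int :=
  match val i with 0%N => -1 | 1%N => 1 | _ => 2 end.

(* Signed Roman dominating function (boolean): conditions (a) and (b);
   values in {-1,1,2} are enforced by the encoding dec3 below. *)
Definition srdfb (T : finType) (e : rel T) (f : T -> int) : bool :=
  [forall x, 1 <= \sum_(y | closed_nbhd e x y) f y] &&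
  [forall x, (f x == -1) ==> [exists y, e x y && (f y == 2)]].

(* gamma_sR: minimum weight of an SRDF.  The constant function 1 is always an
   SRDF of weight #|T|, so #|T| is a valid neutral element for the minimum. *)
Definition gamma_sR (T : finType) (e : rel T) : int :=
  \big[Order.min/(#|T|%:Z)]_(g : {ffun T -> 'I_3} | srdfb e (fun x => dec3 (g x)))
     weight (fun x => dec3 (g x)).

(* Join G \/ K_1: vertex set option T, with None the new universal vertex. *)
Definition join_K1 (T : finType) (e : rel T) : rel (option T) :=
  fun u v => match u, v with
             | Some x, Some y => e x y
             | None, None => false
             | _, _ => true
             end.

(** Condition (a) at the universal vertex of [G \/ K_1] says that the whole
    weight is at least 1.  Conversely, an SRDF of [G] of weight 0 extends to
    [G \/ K_1] by the value 1 on the new vertex: every old closed neighbourhood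
    gains 1, and the neighbourhood of the new vertex has total weight 1. *)

From mathcomp Require Import all_boot all_order all_algebra.
Import Order.TTheory GRing.Theory Num.Theory.
Local Open Scope ring_scope.

Lemma big_option (R : nmodType) (T : finType) (P : pred (option T))
    (F : option T -> R) :
  \sum_(o | P o) F o =
    (if P None then F None else 0) + \sum_(x | P (Some x)) F (Some x).
Proof.
case: ifP => PN.
  rewrite (bigD1 None) //=; congr (_ + _).
  rewrite (reindex_omap Some id); last by case=> [x|] //=; rewrite andbF.
  by apply: eq_bigl => x /=; rewrite eqxx andbT andbT.
rewrite add0r (reindex_omap Some id); last by case=> [x|] //; rewrite /= PN.
by apply: eq_bigl => x /=; rewrite eqxx andbT.
Qed.

Lemma bigmin_attained {disp : Order.disp_t} {R : orderType disp} {I : finType}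
    (j : I) (P : pred I) (F : I -> R) (x0 : R) :
  P j -> (F j <= x0)%O ->
  exists2 i, P i & F i = \big[Order.min/x0]_(i | P i) F i.
Proof.
move=> Pj Fj_le; set v := \big[_/_]_(i | _) _.
have [v_x0 | //] : v = x0 \/ exists2 i, P i & F i = v.
  rewrite /v; elim/big_ind: _ => [|a b Ha Hb|i Pi]; first by left.
    by rewrite minEle; case: ifP.
  by right; exists i.
exists j => //; apply/le_anti; rewrite (bigmin_inf j) //.
by rewrite -/v v_x0 Fj_le.
Qed.

Lemma eq_srdfb {T : finType} (e : rel T) {f f' : T -> int} :
  f =1 f' -> srdfb e f = srdfb e f'.
Proof.
move=> ff'; rewrite /srdfb.
by congr (_ && _); apply: eq_forallb => x;
  [under eq_bigr do rewrite ff' | under eq_existsb do rewrite ff']; rewrite ?ff'.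
Qed.

Section SignedRomanDomination.

Context {T : finType} (e : rel T).

Lemma gamma_sR_le (g : {ffun T -> 'I_3}) :
  srdfb e (fun x => dec3 (g x)) -> gamma_sR e <= weight (fun x => dec3 (g x)).
Proof. by move=> Pg; apply: (bigmin_inf g). Qed.

Definition one3 : 'I_3 := Ordinal (isT : (1 < 3)%N).

Definition const_one : {ffun T -> 'I_3} := [ffun => one3].

Lemma srdfb_const_one : srdfb e (fun x => dec3 (const_one x)).
Proof.
apply/andP; split; apply/forallP => x; rewrite ?ffunE //.
under eq_bigr do rewrite ffunE.
rewrite sumr_const /= ler1n.
by apply/card_gt0P; exists x; rewrite unfold_in /= eqxx.
Qed.

Lemma weight_const_one : weight (fun x => dec3 (const_one x)) = #|T|%:Z.
Proof.
by rewrite /weight; under eq_bigr do rewrite ffunE; rewrite sumr_const natz.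
Qed.

Lemma gamma_sR_attained :
  exists2 g : {ffun T -> 'I_3},
    srdfb e (fun x => dec3 (g x)) & weight (fun x => dec3 (g x)) = gamma_sR e.
Proof.
apply: (bigmin_attained const_one); first exact: srdfb_const_one.
by rewrite weight_const_one.
Qed.

Lemma closed_nbhd_join_K1_None (u : option T) : closed_nbhd (join_K1 e) None u.
Proof. by case: u. Qed.

Lemma sum_closed_nbhd_join_K1_None (f : option T -> int) :
  \sum_(u | closed_nbhd (join_K1 e) None u) f u = weight f.
Proof. exact/eq_bigl/closed_nbhd_join_K1_None. Qed.

Lemma srdfb_join_K1_weight_ge1 (f : option T -> int) :
  srdfb (join_K1 e) f -> 1 <= weight f.
Proof.
by case/andP=> /forallP/(_ None); rewrite sum_closed_nbhd_join_K1_None.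
Qed.

Definition extend_one (f : T -> int) (u : option T) : int :=
  if u is Some x then f x else 1.

Lemma weight_extend_one (f : T -> int) :
  weight (extend_one f) = 1 + weight f.
Proof. by rewrite /weight big_option. Qed.

Lemma closed_nbhd_join_K1_Some (x y : T) :
  closed_nbhd (join_K1 e) (Some x) (Some y) = closed_nbhd e x y.
Proof. by rewrite /closed_nbhd /= (inj_eq (@Some_inj _)). Qed.

Lemma srdfb_extend_one (f : T -> int) :
  srdfb e f -> 0 <= weight f -> srdfb (join_K1 e) (extend_one f).
Proof.
case/andP=> /forallP f_dom /forallP f_two wf_ge0.
apply/andP; split; apply/forallP=> [[x|]] /=.
- rewrite big_option /= -[1]add0r lerD //.
  by under eq_bigl do rewrite closed_nbhd_join_K1_Some; exact: f_dom.
- by rewrite sum_closed_nbhd_join_K1_None weight_extend_one lerDl.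
- apply/implyP=> /(implyP (f_two x)) /existsP[y /andP[exy fy]].
  by apply/existsP; exists (Some y); rewrite /= exy.
- by [].
Qed.

Definition extend_one_ffun (g : {ffun T -> 'I_3}) : {ffun option T -> 'I_3} :=
  [ffun u => if u is Some x then g x else one3].

Lemma dec3_extend_one_ffun (g : {ffun T -> 'I_3}) :
  (fun u => dec3 (extend_one_ffun g u)) =1 extend_one (fun x => dec3 (g x)).
Proof. by case=> [x|]; rewrite ffunE. Qed.

Lemma weight_extend_one_ffun (g : {ffun T -> 'I_3}) :
  weight (fun u => dec3 (extend_one_ffun g u)) =
    1 + weight (fun x => dec3 (g x)).
Proof.
rewrite -weight_extend_one.
by apply: eq_bigr => u _; rewrite dec3_extend_one_ffun.
Qed.

Lemma srdfb_extend_one_ffun (g : {ffun T -> 'I_3}) :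
  srdfb e (fun x => dec3 (g x)) -> 0 <= weight (fun x => dec3 (g x)) ->
  srdfb (join_K1 e) (fun u => dec3 (extend_one_ffun g u)).
Proof.
rewrite (eq_srdfb (join_K1 e) (dec3_extend_one_ffun g)).
exact: srdfb_extend_one.
Qed.

End SignedRomanDomination.

Lemma gamma_sR_join_K1_ge1 (T : finType) (e : rel T) : 1 <= gamma_sR (join_K1 e).
Proof.
have [h Ph <-] := gamma_sR_attained (join_K1 e).
exact: srdfb_join_K1_weight_ge1 Ph.
Qed.

Theorem mainTheorem2 (T : finType) (e : rel T)
  (e_sym : symmetric e) (e_irr : irreflexive e) :
  1 <= gamma_sR (join_K1 e) /\
  (gamma_sR e = 0 -> gamma_sR (join_K1 e) = 1).
Proof.
split=> [|gamma0]; first exact: gamma_sR_join_K1_ge1.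
have [g Pg wg] := gamma_sR_attained e.
rewrite gamma0 in wg.
apply/le_anti; rewrite gamma_sR_join_K1_ge1 andbT.
rewrite -[1]addr0 -wg -weight_extend_one_ffun gamma_sR_le //.
by rewrite srdfb_extend_one_ffun // wg.
Qed.
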